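(* Let $(X,\mathcal T,P,\leq,\{\sigma_x:x\in X\})$ be a typed topological space and $p\in P$. If $X$ is $p$-symmetrically typed and $\sigma$ has least $p$-neighborhood, then for all $x,y\in X$: $x\notin p\vdash U_{min}(y)$ if and only if $y\notin p\vdash U_{min}(x)$ (equivalently, $x\in p\vdash U_{min}(y)$ iff $y\in p\vdash U_{min}(x)$).
   Context: A typed topological space $(X,\mathcal T,P,\leq,\{\sigma_x:x\in X\})$ consists of a topological space $(X,\mathcal T)$, a partially ordered set $(P,\leq)$ of types, and for each $x\in X$ a partial function $\sigma_x:\{O\in\mathcal T:x\in O\}\to P$ such that for all $U,V$ in its domain, $\sigma_x(U)\leq\sigma_x(V)$ iff $U\subseteq V$. $U$ is a type-$p$ neighborhood of $x$ ($p\vdash U(x)$) if $U$ is in the domain of $\sigma_x$ and $\sigma_x(U)=p$. $\sigma$ has least $p$-neighborhood if every $x$ has a type-$p$ neighborhood $p\vdash U_{min}(x)$ contained in every type-$p$ neighborhood of $x$. $X$ is $p$-symmetrically typed if for any two points $x,y\in X$ such that $y\notin U$ for some type-$p$ neighborhood $U$ of $x$, there exists a type-$p$ neighborhood $V$ of $y$ with $x\notin V$. *)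

From HB Require Import structures.
From mathcomp Require Import all_boot all_order.
From mathcomp Require Import boolp classical_sets topology.
Import Order.TTheory.
Local Open Scope classical_set_scope.
Local Open Scope order_scope.

(* A typing of a topological space X by a poset P: for each x, a partial
   function sigma x from the open neighbourhoods of x to P (None = undefined),
   such that for U,V in its domain, sigma x U <= sigma x V iff U `<=` V. *)
Definition is_typing {d : Order.disp_t} {P : porderType d} {X : topologicalType}
    (sigma : X -> set X -> option P) : Prop :=
  (forall x U a, sigma x U = Some a -> open U /\ U x) /\
  (forall x U V a b, sigma x U = Some a -> sigma x V = Some b ->
      ((a <= b) <-> (U `<=` V))).

Definition type_nbhd {d : Order.disp_t} {P : porderType d} {X : topologicalType}
    (sigma : X -> set X -> option P) (p : P) (x : X) (U : set X) : Prop :=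
  sigma x U = Some p.

(* U is the least type-p neighbourhood of x  (p |- U_min(x)) *)
Definition least_type_nbhd {d : Order.disp_t} {P : porderType d} {X : topologicalType}
    (sigma : X -> set X -> option P) (p : P) (x : X) (U : set X) : Prop :=
  type_nbhd sigma p x U /\ (forall V, type_nbhd sigma p x V -> U `<=` V).

Definition has_least_nbhd {d : Order.disp_t} {P : porderType d} {X : topologicalType}
    (sigma : X -> set X -> option P) (p : P) : Prop :=
  forall x : X, exists U, least_type_nbhd sigma p x U.

Definition p_symmetric {d : Order.disp_t} {P : porderType d} {X : topologicalType}
    (sigma : X -> set X -> option P) (p : P) : Prop :=
  forall x y : X, (exists U, type_nbhd sigma p x U /\ ~ U y) ->
    exists V, type_nbhd sigma p y V /\ ~ V x.

From mathcomp Require Import all_boot all_order.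
From mathcomp Require Import boolp classical_sets topology.

Lemma least_type_nbhd_notin {d : Order.disp_t} {P : porderType d} {X : topologicalType}
    (sigma : X -> set X -> option P) (p : P) (x y : X) (Ux Uy : set X) :
  p_symmetric sigma p -> least_type_nbhd sigma p x Ux ->
  type_nbhd sigma p y Uy -> ~ Uy x -> ~ Ux y.
Proof.
move=> sym [_ Ux_least] pUy Uy'x Uxy.
have [V [pV V'x]] := sym y x (ex_intro _ Uy (conj pUy Uy'x)).
exact: V'x (Ux_least V pV y Uxy).
Qed.

Theorem proposition2p17 (d : Order.disp_t) (P : porderType d) (X : topologicalType)
    (sigma : X -> set X -> option P) (Hsigma : is_typing sigma) (p : P)
    (Hsym : p_symmetric sigma p) (Hleast : has_least_nbhd sigma p) :
  forall (x y : X) (Ux Uy : set X),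
    least_type_nbhd sigma p x Ux -> least_type_nbhd sigma p y Uy ->
    (~ Uy x <-> ~ Ux y).
Proof.
move=> x y Ux Uy Ux_least Uy_least; split.
- exact: least_type_nbhd_notin Hsym Ux_least Uy_least.1.
- exact: least_type_nbhd_notin Hsym Uy_least Ux_least.1.
Qed.
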